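(* For every set of names $\rho$ and every process $P$, if $\rho\vdash P$ then $\rho\subseteq\mathrm{fn}(P)$.
   Context: Let $\mathcal N$ be a countable set of names. Processes are generated by $P,Q ::= 0 \mid P\mid Q \mid (\nu a)P \mid (a)P \mid \alpha.P$, where $(\nu a)P$ is name restriction (binding $a$), $(a)P$ is the authorization scope ($a$ not bound), and prefixes are $\alpha ::= \overline{a}\langle b\rangle$ (output) $\mid a(x)$ (input, binding $x$) $\mid \overline{a}\langle\!\langle b\rangle\!\rangle$ (send authorization for $b$ on $a$) $\mid a\langle\!\langle b\rangle\!\rangle$ (receive authorization for $b$ on $a$; $b$ not bound). Free names: $\mathrm{fn}(0)=\emptyset$, $\mathrm{fn}(P\mid Q)=\mathrm{fn}(P)\cup\mathrm{fn}(Q)$, $\mathrm{fn}((\nu a)P)=\mathrm{fn}(P)\setminus\{a\}$, $\mathrm{fn}((a)P)=\{a\}\cup\mathrm{fn}(P)$, $\mathrm{fn}(\overline{a}\langle b\rangle.P)=\mathrm{fn}(\overline{a}\langle\!\langle b\rangle\!\rangle.P)=\mathrm{fn}(a\langle\!\langle b\rangle\!\rangle.P)=\{a,b\}\cup\mathrm{fn}(P)$, $\mathrm{fn}(a(x).P)=\{a\}\cup(\mathrm{fn}(P)\setminus\{x\})$. The typing judgment $\rho\vdash P$ ($\rho$ a set of names) is the least relation closed under the rules: $\emptyset\vdash 0$; if $\rho_1\vdash P$ and $\rho_2\vdash Q$ then $\rho_1\cup\rho_2\vdash P\mid Q$; if $\rho\vdash P$ and $a\notin\rho$ then $\rho\vdash(\nu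 a)P$; if $\rho\vdash P$ then $\rho\setminus\{a\}\vdash(a)P$; if $\rho\vdash P$ then $\rho\cup\{a\}\vdash\overline{a}\langle b\rangle.P$; if $\rho\vdash P$ and $x\notin\rho$ then $\rho\cup\{a\}\vdash a(x).P$; if $\rho\vdash P$ and $b\notin\rho$ then $\rho\cup\{a,b\}\vdash\overline{a}\langle\!\langle b\rangle\!\rangle.P$; if $\rho\vdash P$ then $(\rho\setminus\{b\})\cup\{a\}\vdash a\langle\!\langle b\rangle\!\rangle.P$. *)

Definition name := nat.
Definition nset := name -> Prop.

Inductive prefix : Type :=
| POut  : name -> name -> prefix
| PIn   : name -> name -> prefix     (* a(x)   input, binds x *)
| PSAuth : name -> name -> prefix
| PRAuth : name -> name -> prefix.   (* a<<b>> receive authorization, b not bound *)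

Inductive proc : Type :=
| Nil  : proc
| Par  : proc -> proc -> proc
| Res  : name -> proc -> proc
| Auth : name -> proc -> proc
| Pre  : prefix -> proc -> proc.

Fixpoint fn (P : proc) : nset :=
  match P with
  | Nil => fun _ => False
  | Par P Q => fun n => fn P n \/ fn Q n
  | Res a P => fun n => fn P n /\ n <> a
  | Auth a P => fun n => n = a \/ fn P n
  | Pre (POut a b) P => fun n => n = a \/ n = b \/ fn P n
  | Pre (PIn a x) P => fun n => n = a \/ (fn P n /\ n <> x)
  | Pre (PSAuth a b) P => fun n => n = a \/ n = b \/ fn P n
  | Pre (PRAuth a b) P => fun n => n = a \/ n = b \/ fn P n
  end.

(* Set equality is extensional: each rule concludes for any rho
   extensionally equal to the prescribed set. *)
Definition nset_eq (A B : nset) : Prop := forall n, A n <-> B n.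

Inductive typed : nset -> proc -> Prop :=
| T_Nil : forall rho, nset_eq rho (fun _ => False) -> typed rho Nil
| T_Par : forall rho rho1 rho2 P Q,
    typed rho1 P -> typed rho2 Q ->
    nset_eq rho (fun n => rho1 n \/ rho2 n) -> typed rho (Par P Q)
| T_Res : forall rho a P,
    typed rho P -> ~ rho a -> typed rho (Res a P)
| T_Auth : forall rho rho' a P,
    typed rho P -> nset_eq rho' (fun n => rho n /\ n <> a) ->
    typed rho' (Auth a P)
| T_Out : forall rho rho' a b P,
    typed rho P -> nset_eq rho' (fun n => rho n \/ n = a) ->
    typed rho' (Pre (POut a b) P)
| T_In : forall rho rho' a x P,
    typed rho P -> ~ rho x -> nset_eq rho' (fun n => rho n \/ n = a) ->
    typed rho' (Pre (PIn a x) P)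
| T_SAuth : forall rho rho' a b P,
    typed rho P -> ~ rho b ->
    nset_eq rho' (fun n => rho n \/ n = a \/ n = b) ->
    typed rho' (Pre (PSAuth a b) P)
| T_RAuth : forall rho rho' a b P,
    typed rho P -> nset_eq rho' (fun n => (rho n /\ n <> b) \/ n = a) ->
    typed rho' (Pre (PRAuth a b) P).


(* Induction on the typing derivation: every rule adds to rho only subjects
   and objects of the prefix, which are free in the conclusion, and removes
   from rho every name the process binds ((nu a) requires a outside rho, an
   input a(x) requires x outside rho). *)

Definition nsubset (A B : nset) : Prop := forall n, A n -> B n.

Lemma nsubset_eq_l (A A' B : nset) :
  nset_eq A A' -> nsubset A' B -> nsubset A B.
Proof. intros HA HA'B n Hn; apply HA'B, HA, Hn. Qed.

Lemma nsubset_remove_bound (rho F : nset) (x : name) :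
  nsubset rho F -> ~ rho x -> nsubset rho (fun n => F n /\ n <> x).
Proof.
  intros HrhoF Hx n Hn; split.
  - apply HrhoF, Hn.
  - intros ->; contradiction.
Qed.

Arguments nsubset_remove_bound {rho F x}.

Lemma typed_fn (rho : nset) (P : proc) : typed rho P -> nsubset rho (fn P).
Proof.
  induction 1 as
    [rho Heq
    | rho rho1 rho2 P Q _ IHP _ IHQ Heq
    | rho a P _ IHP Ha
    | rho rho' a P _ IHP Heq
    | rho rho' a b P _ IHP Heq
    | rho rho' a x P _ IHP Hx Heq
    | rho rho' a b P _ IHP Hb Heq
    | rho rho' a b P _ IHP Heq];
    try (eapply nsubset_eq_l; [exact Heq|]); intros n Hn; simpl.
  - contradiction.
  - destruct Hn as [Hn | Hn]; auto.
  - exact (nsubset_remove_bound IHP Ha n Hn).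
  - destruct Hn as [Hn _]; auto.
  - destruct Hn as [Hn | Hn]; auto.
  - destruct Hn as [Hn | Hn]; [| auto].
    right; exact (nsubset_remove_bound IHP Hx n Hn).
  - destruct Hn as [Hn | [Hn | Hn]]; auto.
  - destruct Hn as [[Hn _] | Hn]; auto.
Qed.

Arguments typed_fn {rho P}.

Theorem mainTheorem2 : forall (rho : nset) (P : proc),
  typed rho P -> forall n, rho n -> fn P n.
Proof. intros rho P HP; exact (typed_fn HP). Qed.
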